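(* There exists an absolute positive constant $c$ such that for any prime power $q$ and any multiplicative subgroup $A$ of the finite field $\mathbb{F}_q$ with $|A|\ge c\,q^{3/4}$, there is a cyclic ordering of the elements of $A$ such that the sum of any two consecutive elements also belongs to $A$.
   Context: A multiplicative subgroup of $\mathbb{F}_q$ is a subgroup of the multiplicative group $\mathbb{F}_q^{*}$. *)

From HB Require Import structures.
From Stdlib Require Import Reals.
From mathcomp Require Import all_boot all_order all_algebra.
Set Implicit Arguments. Unset Strict Implicit. Unset Printing Implicit Defensive.
Import GRing.Theory.
Local Open Scope ring_scope.

Definition mult_subgroup (F : finFieldType) (A : {set F}) : Prop :=
  [/\ (0 : F) \notin A, (1 : F) \in A,
      {in A &, forall x y, x * y \in A} & {in A, forall x, x^-1 \in A}].

Definition good_cyclic_ordering (F : finFieldType) (A : {set F}) (s : seq F) : Prop :=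
  perm_eq s (enum A) /\ cycle (fun x y : F => x + y \in A) s.

From Stdlib Require Import Reals Lra.
From mathcomp Require Import all_boot all_order all_algebra finfield.
From mathcomp Require Import zify ring lra.
Set Implicit Arguments. Unset Strict Implicit. Unset Printing Implicit Defensive.
Import Order.TTheory GRing.Theory Num.Theory.

(* Say that b escapes a subgroup H of A when b and 1 + b lie in A but b does
   not lie in H.  If the elements of a subgroup X of A admit a cyclic ordering
   with consecutive sums in A and b escapes X, then so do the elements of
   X<b> = X u bX u ... u b^(r-1)X: run through the cosets b^i X one after the
   other, alternately along the cycle and its reverse, stepping from coset to
   coset along y -> b y, which is allowed since y + b y = (1 + b) y lies in A.
   Starting from the subgroup {1} and escaping repeatedly, we reach A as soon
   as every proper subgroup of A can be escaped.
   A second-moment count over the cosets aK x cL shows that for all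
   subgroups K, L of F_q^* the number of x in K with x + 1 in L is
   (q - 2)|K||L|/q^2 up to an error of sqrt(5q).  If no element escapes the
   proper subgroup H of A, then every x in A with x + 1 in A lies in H, and
   comparing these counts for (A, A) and (H, A) contradicts |H| <= |A|/2 once
   |A| >= 4 q^(3/4). *)

Section MultSubgroups.
Local Open Scope ring_scope.
Variable F : finFieldType.
Implicit Types A H X : {set F}.

Lemma mulr_closed_invr X : 0 \notin X -> 1 \in X ->
  {in X &, forall x y, x * y \in X} -> {in X, forall x, x^-1 \in X}.
Proof.
move=> X0 X1 XM x xX; have x0 : x != 0 by apply: contraNneq X0 => <-.
have xX_eq : [set x * y | y in X] = X.
  apply/eqP; rewrite eqEcard card_imset ?leqnn ?andbT; last exact: mulfI.
  by apply/subsetP => _ /imsetP[y yX ->]; apply: XM.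
have /imsetP[y yX xy1] : 1 \in [set x * y | y in X] by rewrite xX_eq.
by rewrite -[x^-1]mulr1 xy1 mulKf.
Qed.

Lemma mult_subgroup_mulr_closed X : 0 \notin X -> 1 \in X ->
  {in X &, forall x y, x * y \in X} -> mult_subgroup X.
Proof. by move=> X0 X1 XM; split; last exact: mulr_closed_invr. Qed.

Lemma mult_subgroup1 : mult_subgroup [set 1 : F].
Proof.
apply: mult_subgroup_mulr_closed; rewrite ?inE 1?eq_sym ?oner_eq0 //.
by move=> x y /set1P-> /set1P->; rewrite mulr1 set11.
Qed.

Lemma mem_mulr_mult_subgroup X x a : mult_subgroup X -> a \in X ->
  (x * a \in X) = (x \in X).
Proof.
case=> X0 _ XM XV aX; have a0 : a != 0 by apply: contraNneq X0 => <-.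
apply/idP/idP => [xaX | xX]; last by rewrite XM.
by rewrite -(mulfK a0 x) XM ?XV.
Qed.

Lemma card_proper_mult_subgroup A H : mult_subgroup A -> mult_subgroup H ->
  H \proper A -> (2 * #|H| <= #|A|)%N.
Proof.
case=> A0 _ AM _ subH /properP[sHA [c cA cH]]; case: (subH) => H0 _ _ HV.
have c0 : c != 0 by apply: contraNneq A0 => <-.
have cH_disj : [disjoint H & [set c * y | y in H]].
  apply/pred0P => z /=; apply/andP => -[zH /imsetP[y yH zE]].
  have y0 : y != 0 by apply: contraNneq H0 => <-.
  by move/negP: cH; apply; rewrite -(mulfK y0 c) -zE mem_mulr_mult_subgroup ?HV.
have cHA : H :|: [set c * y | y in H] \subset A.
  rewrite subUset sHA; apply/subsetP => _ /imsetP[y yH ->].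
  by rewrite AM // (subsetP sHA).
move: (subset_leq_card cHA); rewrite cardsU (disjoint_setI0 cH_disj) cards0.
by rewrite subn0 card_imset; [rewrite mul2n addnn | exact: mulfI].
Qed.

Lemma card_div_mult_subgroup X x : mult_subgroup X ->
  #|[set a | x / a \in X]| = if x == 0 then 0%N else #|X|.
Proof.
move=> subX; case: (subX) => X0 _ _ _; have [-> | x0] := eqVneq x 0.
  by apply/eqP; rewrite cards_eq0; apply/eqP/setP => a; rewrite !inE mul0r (negbTE X0).
have div_xK : involutive (fun a => x / a) by move=> a; rewrite invfM invrK mulVKf.
exact: card_preimset X (inv_inj div_xK).
Qed.

Lemma card_div2_mult_subgroup X x y : mult_subgroup X ->
  #|[set a | (x / a \in X) && (y / a \in X)]| = if y / x \in X then #|X| else 0%N.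
Proof.
move=> subX; case: (subX) => X0 _ XM XV.
have [-> | x0] := eqVneq x 0.
  rewrite invr0 mulr0 (negbTE X0); apply/eqP; rewrite cards_eq0; apply/eqP/setP => a.
  by rewrite !inE mul0r (negbTE X0).
have yaE a : y / a = y / x * (x / a) by rewrite mulrA divfK.
case: ifP => yxX.
  have := card_div_mult_subgroup x subX; rewrite (negbTE x0) => <-.
  apply: eq_card => a; rewrite !inE yaE.
  by case: (boolP (x / a \in X)) => //= xaX; rewrite XM.
apply/eqP; rewrite cards_eq0; apply/eqP/setP => a; rewrite !inE yaE.
by apply/negP => /andP[xaX]; rewrite mem_mulr_mult_subgroup // yxX.
Qed.

End MultSubgroups.

Section SumCycles.
Local Open Scope ring_scope.
Variables (F : finFieldType) (A : {set F}).
Hypotheses (A0 : 0 \notin A) (A1 : 1 \in A) (AM : {in A &, forall x y, x * y \in A}).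

Definition sum_rel : rel F := fun x y => x + y \in A.

Definition sum_cycle (X : {set F}) (s : seq F) :=
  perm_eq s (enum X) /\ cycle sum_rel s.

Lemma sum_relC : symmetric sum_rel.
Proof. by move=> x y; rewrite /sum_rel addrC. Qed.

Lemma sum_relM g x y : g \in A -> sum_rel x y -> sum_rel (g * x) (g * y).
Proof. by move=> gA; rewrite /sum_rel -mulrDr; apply: AM. Qed.

Lemma sum_rel_mulr b x : 1 + b \in A -> x \in A -> sum_rel x (b * x).
Proof. by move=> b1A xA; rewrite /sum_rel -{1}(mul1r x) -mulrDl AM. Qed.

Lemma exprn_in b n : b \in A -> b ^+ n \in A.
Proof. by move=> bA; elim: n => [|n IHn]; rewrite ?expr0 // exprS AM. Qed.

Section Layers.
Variable b : F.
Hypotheses (bA : b \in A) (b1A : 1 + b \in A).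

Definition layers n (s : seq F) := [seq b ^+ i * x | i <- iota 0 n, x <- s].

Lemma layersS n s : layers n.+1 s = layers n s ++ [seq b ^+ n * x | x <- s].
Proof. by rewrite /layers -addn1 iotaD allpairs_cat allpairs1l. Qed.

Lemma sum_rel_expS n x : x \in A -> sum_rel (b ^+ n * x) (b ^+ n.+1 * x).
Proof. by move=> xA; rewrite exprS -mulrA sum_rel_mulr // AM // exprn_in. Qed.

(* Enter layer n at b^n * h0, run through the earlier layers along the reversed
   cycle (induction hypothesis), then finish layer n along the cycle. *)
Lemma layered_path n h0 s : s != [::] -> cycle sum_rel (h0 :: s) ->
    {subset h0 :: s <= A} ->
  exists p, [/\ path sum_rel (b ^+ n * h0) p,
    last (b ^+ n * h0) p = b ^+ n * last h0 s &
    perm_eq (b ^+ n * h0 :: p) (layers n.+1 (h0 :: s))].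
Proof.
elim: n s => [|n IHn] s s0 cyc_s sA.
  exists s; rewrite expr0 !mul1r; split => //.
    by move: cyc_s; rewrite /= rcons_path => /andP[].
  rewrite /layers allpairs1l expr0.
  by rewrite (eq_map (g := id)) ?map_id // => x; rewrite mul1r.
case: s s0 cyc_s sA => // h1 s _ cyc_s sA.
have cyc_rev : cycle sum_rel (h0 :: rev (h1 :: s)).
  rewrite -rev_rcons rev_cycle -rot1_cons rot_cycle.
  by rewrite (eq_cycle (e' := sum_rel)) // => x y; rewrite sum_relC.
have rev_s0 : rev (h1 :: s) != [::] by rewrite -size_eq0 size_rev.
have rev_sA : {subset h0 :: rev (h1 :: s) <= A}.
  by move=> x; rewrite inE mem_rev; apply: sA.
have [p [path_p last_p perm_p]] := IHn _ rev_s0 cyc_rev rev_sA.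
rewrite rev_cons last_rcons in last_p.
exists ((b ^+ n * h0 :: p) ++ [seq b ^+ n.+1 * x | x <- h1 :: s]); split.
- have h0A : h0 \in A by apply: sA; rewrite mem_head.
  have h1A : h1 \in A by apply: sA; rewrite !inE eqxx orbT.
  rewrite /= sum_relC sum_rel_expS // cat_path path_p last_p /= sum_rel_expS //=.
  rewrite path_map; apply: (sub_path (e := sum_rel)).
    by move=> x y; apply: sum_relM; apply: exprn_in.
  by move: cyc_s; rewrite [cycle _ _]/= rcons_path => /and3P[].
- by rewrite last_cat /= last_map.
- rewrite perm_sym layersS map_cons -[_ :: map _ _]cat1s perm_catCA cat1s perm_cons.
  rewrite perm_cat2r perm_sym; apply: (perm_trans perm_p); apply: perm_allpairs => //.
  by rewrite perm_cons perm_rev.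
Qed.

End Layers.

Section Extension.
Variables (X : {set F}) (b : F).
Hypotheses (subX : mult_subgroup X) (sXA : X \subset A).
Hypotheses (bA : b \in A) (b1A : 1 + b \in A) (bX : b \notin X).

Let b0 : b != 0. Proof. by apply: contraNneq A0 => <-. Qed.

(* The least r > 0 with b ^+ r \in X; it exists since b ^+ (#|F| - 1) = 1. *)
Definition coset_order := (find (fun n => b ^+ n.+1 \in X) (iota 0 #|F|)).+1.
Local Notation r := coset_order.

Lemma coset_orderP :
  [/\ (0 < r)%N, b ^+ r \in X & forall m, (0 < m)%N -> b ^+ m \in X -> (r <= m)%N].
Proof.
set P := fun n => b ^+ n.+1 \in X; have q_gt1 : (1 < #|F|)%N := finNzRing_gt1 F.
have hasP : has P (iota 0 #|F|).
  apply/hasP; exists (#|F| - 2)%N; first by rewrite mem_iota; lia.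
  rewrite /P (_ : b ^+ (#|F| - 2).+1 = 1); last first.
    have q_eq : (#|F| - 2).+2 = #|F| by lia.
    by apply: (mulfI b0); rewrite mulr1 -exprS q_eq expf_card.
  by case: subX.
have find_lt : (find P (iota 0 #|F|) < #|F|)%N.
  by rewrite -[X in (_ < X)%N](size_iota 0) -has_find.
split=> // [|[//|m] _ bmX].
  by move: (nth_find 0 hasP); rewrite nth_iota.
rewrite ltnNge; apply/negP => lt_m; move: (before_find 0 lt_m).
by rewrite nth_iota ?add0n /P ?bmX //; apply: ltn_trans find_lt.
Qed.

Lemma coset_order_gt1 : (1 < r)%N.
Proof.
case: coset_orderP => r_gt0 brX _; rewrite ltn_neqAle eq_sym r_gt0 andbT.
by apply: contraNneq bX => r1; rewrite r1 expr1 in brX.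
Qed.

Lemma expr_coset_inj i j x y : (i < r)%N -> (j < r)%N -> x \in X -> y \in X ->
  b ^+ i * x = b ^+ j * y -> i = j.
Proof.
wlog le_ij : i j x y / (i <= j)%N.
  move=> W ir jr xX yX E; case: (leqP i j) => [le | /ltnW le]; first exact: W E.
  by symmetry; apply: (W j i y x).
move=> _ jr xX yX E; apply/eqP; rewrite eqn_leq le_ij leqNgt; apply/negP => lt_ij.
case: subX => X0 _ XM XV; case: coset_orderP => _ _ /(_ (j - i)%N).
have y0 : y != 0 by apply: contraNneq X0 => <-.
have -> : b ^+ (j - i) = x / y.
  apply: (mulfI (expf_neq0 i b0)).
  by rewrite mulrA -exprD subnKC ?E ?mulfK // ltnW.
rewrite subn_gt0 lt_ij XM ?XV // => /(_ isT isT); lia.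
Qed.

Definition Xb := [set z | z \in layers b r (enum X)].

Lemma XbP z : reflect (exists i y, [/\ (i < r)%N, y \in X & z = b ^+ i * y]) (z \in Xb).
Proof.
rewrite inE; apply: (iffP allpairsP) => [[[i y] []] | [i [y [ir yX ->]]]].
  by rewrite mem_iota mem_enum => ir yX ->; exists i, y.
by exists (i, y); rewrite mem_iota mem_enum.
Qed.

Lemma Xb_subset : Xb \subset A.
Proof.
apply/subsetP => _ /XbP[i [y [_ yX ->]]].
by apply: AM; [apply: exprn_in | apply: (subsetP sXA)].
Qed.

Lemma mult_subgroup_Xb : mult_subgroup Xb.
Proof.
case: subX => _ X1 XM _; case: coset_orderP => _ brX _.
apply: mult_subgroup_mulr_closed.
- by apply: contra A0; apply: (subsetP Xb_subset).
- by apply/XbP; exists 0%N, 1; rewrite mulr1 expr0 (ltnW coset_order_gt1).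
move=> _ _ /XbP[i [x [ir xX ->]]] /XbP[j [y [jr yX ->]]].
have -> : b ^+ i * x * (b ^+ j * y) = b ^+ (i + j) * (x * y) by rewrite exprD mulrACA.
apply/XbP; case: (ltnP (i + j) r) => ijr.
  by exists (i + j)%N, (x * y); rewrite XM.
exists (i + j - r)%N, (b ^+ r * (x * y)); rewrite !XM // mulrA -exprD subnK //.
by split=> //; lia.
Qed.

Lemma proper_Xb : X \proper Xb.
Proof.
case: subX => _ X1 _ _; have r_gt1 := coset_order_gt1.
apply/properP; split; last first.
  by exists b; rewrite // -[b]mulr1 -[b]expr1; apply/XbP; exists 1%N, 1.
by apply/subsetP => x xX; apply/XbP; exists 0%N, x; rewrite expr0 mul1r ltnW.
Qed.

Lemma perm_layers_Xb d : perm_eq d (enum X) -> perm_eq (layers b r d) (enum Xb).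
Proof.
move=> perm_d; apply: uniq_perm; rewrite ?enum_uniq //; last first.
  by move=> z; rewrite mem_enum inE; apply: mem_allpairs => //; apply: perm_mem.
apply: allpairs_uniq; rewrite ?iota_uniq ?(perm_uniq perm_d) ?enum_uniq //.
move=> _ _ /allpairsP[[i x] [ir xd ->]] /allpairsP[[j y] [jr yd ->]] E.
move: ir jr xd yd; rewrite !mem_iota !(perm_mem perm_d) !mem_enum.
move=> /andP[_ ir] /andP[_ jr] xX yX; have /= eq_ij := expr_coset_inj ir jr xX yX E.
by move: E; rewrite /= eq_ij => /(mulfI (expf_neq0 _ b0)) ->.
Qed.

Lemma sum_cycle_extend d : (1 < #|X|)%N -> sum_cycle X d -> exists d', sum_cycle Xb d'.
Proof.
move=> X_gt1 [perm_d cyc_d]; move: X_gt1; rewrite cardE -(perm_size perm_d).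
case: d perm_d cyc_d => [|h0 [|h1 s]] // perm_d cyc_d _.
have sA : {subset [:: h0, h1 & s] <= A}.
  by move=> x; rewrite (perm_mem perm_d) mem_enum; apply: (subsetP sXA).
have r_gt0 := ltnW coset_order_gt1.
have [p [path_p last_p perm_p]] :=
  layered_path bA b1A r.-1 (s := h1 :: s) isT cyc_d sA.
exists (b ^+ r.-1 * h0 :: p); split.
  by apply: perm_trans perm_p _; rewrite prednK // perm_layers_Xb.
rewrite /= rcons_path path_p last_p sum_relM ?exprn_in //.
by move: cyc_d; rewrite /= rcons_path => /and3P[].
Qed.

Lemma sum_cycle_powers : X = [set 1] -> exists d, sum_cycle Xb d.
Proof.
move=> X1; case: coset_orderP => r_gt0 brX _; exists (traject ( *%R b) 1 r).
have traject_layers x n : traject ( *%R b) x n = [seq b ^+ i * x | i <- iota 0 n].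
  elim: n => // n IHn; rewrite trajectSr IHn -addn1 iotaD map_cat /=.
  by rewrite cats1 iter_mulr.
split.
  have -> : traject ( *%R b) 1 r = layers b r [:: 1] by rewrite /layers allpairs1r.
  by rewrite perm_layers_Xb // X1 enum_set1.
move: brX; rewrite X1 inE => /eqP; case: r r_gt0 => // n _ bn1.
rewrite trajectS [cycle _ _]/=.
have -> : rcons (traject ( *%R b) (b * 1) n) 1 = traject ( *%R b) (b * 1) n.+1.
  by rewrite trajectSr -iterSr iter_mulr_1 bn1.
apply: (sub_in_path (P := [in A]) (e := frel ( *%R b))); last exact: fpath_traject.
  by move=> x y xA _ /eqP <-; apply: sum_rel_mulr.
by rewrite -trajectS; apply/allP => y /trajectP[i _ ->]; rewrite iter_mulr_1 exprn_in.
Qed.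
End Extension.

Lemma sum_cycle_of_escapes : (1 < #|A|)%N ->
    (forall H, mult_subgroup H -> H \proper A ->
       exists b, [/\ b \in A, 1 + b \in A & b \notin H]) ->
  exists s, sum_cycle A s.
Proof.
move=> A_gt1 escape.
suff grow X d : mult_subgroup X -> X \subset A -> (1 < #|X|)%N -> sum_cycle X d ->
    exists s, sum_cycle A s.
  have sub1 := mult_subgroup1 F; have s1A : [set 1] \subset A by rewrite sub1set.
  have [|b [bA b1A b1]] := escape _ sub1; first by rewrite properEcard s1A cards1.
  have [d cyc_d] := sum_cycle_powers sub1 s1A bA b1A b1 erefl.
  apply: grow cyc_d; [exact: mult_subgroup_Xb | exact: Xb_subset |].
  by rewrite -(cards1 (1 : F)) proper_card ?proper_Xb.
have [n] := ubnP (#|A| - #|X|); elim: n => // n IHn in X d *.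
move=> lt_n subX sXA X_gt1 cyc_d.
have [<- | XnA] := eqVneq X A; first by exists d.
have [|b [bA b1A bX]] := escape X subX; first by rewrite properEneq XnA sXA.
have [d' cyc_d'] := sum_cycle_extend subX sXA bA b1A bX X_gt1 cyc_d.
have lt_X_Xb := proper_card (proper_Xb subX sXA bA b1A bX).
have le_Xb_A := subset_leq_card (Xb_subset sXA bA).
apply: (IHn _ d') cyc_d'; [lia | exact: mult_subgroup_Xb | exact: Xb_subset | lia].
Qed.

End SumCycles.

Lemma sum_card_and (T U V : finType) (P : T -> U -> bool) (Q : T -> V -> bool) :
  \sum_a \sum_b #|[set x | P x a && Q x b]| =
  \sum_x #|[set a | P x a]| * #|[set b | Q x b]|.
Proof.
have card_sumb (W : finType) (R : pred W) : #|[set w | R w]| = \sum_w R w.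
  by rewrite -sum1dep_card big_mkcond; apply: eq_bigr => w _; case: (R w).
transitivity (\sum_a \sum_x \sum_b P x a * Q x b).
  apply: eq_bigr => a _; rewrite [RHS]exchange_big; apply: eq_bigr => b _.
  by rewrite card_sumb; apply: eq_bigr => x _; rewrite mulnb.
by rewrite exchange_big; apply: eq_bigr => x _; rewrite !card_sumb big_distrlr.
Qed.

Section SumOfSquares.
Local Open Scope ring_scope.

Lemma sum_sqr_affine (R : comRingType) (I : finType) (g : I -> R) (M T : R) :
  \sum_i (M * g i - T) ^+ 2 =
  M ^+ 2 * \sum_i g i ^+ 2 - 2 * M * T * \sum_i g i + T ^+ 2 * #|I|%:R.
Proof.
transitivity (\sum_i (M ^+ 2 * g i ^+ 2 - 2 * M * T * g i + T ^+ 2)).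
  by apply: eq_bigr => i _; ring.
rewrite big_split sumrB /= -!mulr_sumr sumr_const mulr_natr.
by rewrite -mulrnAr expr2.
Qed.

Lemma card_sqr_le_sum (R : realDomainType) (I : finType) (g : I -> R) (S : pred I)
    (c M T : R) :
  {in S, forall i, g i = c} -> #|S|%:R * (M * c - T) ^+ 2 <= \sum_i (M * g i - T) ^+ 2.
Proof.
move=> gS; rewrite (bigID S) /= -[leLHS]addr0 lerD ?sumr_ge0 //; last first.
  by move=> i _; apply: sqr_ge0.
have -> : \sum_(i | S i) (M * g i - T) ^+ 2 = \sum_(i in S) (M * c - T) ^+ 2.
  by apply: eq_bigr => i /gS ->.
by rewrite sumr_const mulr_natl.
Qed.

End SumOfSquares.

Definition shift_count (F : finFieldType) (K L : {set F}) :=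
  #|[set x in K | (x + 1)%R \in L]|.

Section ShiftCount.
Local Open Scope ring_scope.
Variables (F : finFieldType) (K L : {set F}).
Hypotheses (subK : mult_subgroup K) (subL : mult_subgroup L).

Definition coset_shift_count a c := #|[set x | (x / a \in K) && ((x + 1) / c \in L)]|.

Definition shift_pairs :=
  [set xy : F * F | (xy.2 / xy.1 \in K) && ((xy.2 + 1) / (xy.1 + 1) \in L)].

Lemma coset_shift_count_id a c : a \in K -> c \in L ->
  coset_shift_count a c = shift_count K L.
Proof.
case: (subK) (subL) => _ _ _ KV [_ _ _ LV] aK cL; apply: eq_card => x.
by rewrite !inE !mem_mulr_mult_subgroup ?KV ?LV.
Qed.

Lemma card_nonzero_shift : #|[set x : F | (x != 0) && (x + 1 != 0)]| = (#|F| - 2)%N.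
Proof.
have -> : [set x : F | (x != 0) && (x + 1 != 0)] = ~: [set 0; -1].
  by apply/setP => x; rewrite !inE addr_eq0 negb_or.
by rewrite cardsCs setCK cards2 eq_sym oppr_eq0 oner_eq0.
Qed.

Lemma sum_coset_shift_count :
  (\sum_a \sum_c coset_shift_count a c = (#|F| - 2) * (#|K| * #|L|))%N.
Proof.
rewrite /coset_shift_count sum_card_and -card_nonzero_shift -sum_nat_cond_const.
rewrite [RHS]big_mkcond; apply: eq_bigr => x _.
rewrite !card_div_mult_subgroup // addr_eq0.
by case: (x == 0); case: (x == -1); rewrite ?mul0n ?muln0.
Qed.

Lemma sum_coset_shift_count_sqr :
  (\sum_a \sum_c coset_shift_count a c ^ 2 = #|K| * #|L| * #|shift_pairs|)%N.
Proof.
transitivity (\sum_(a : F) \sum_(c : F) #|[set xy : F * F |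
    (((xy.1 / a)%R \in K) && ((xy.2 / a)%R \in K)) &&
    ((((xy.1 + 1) / c)%R \in L) && (((xy.2 + 1) / c)%R \in L))]|)%N.
  apply: eq_bigr => a _; apply: eq_bigr => c _.
  rewrite /coset_shift_count expnS expn1 -cardsX; apply: eq_card => -[x y].
  by rewrite !inE /= andbACA.
rewrite sum_card_and mulnC -sum_nat_cond_const [RHS]big_mkcond.
apply: eq_bigr => xy _; rewrite !card_div2_mult_subgroup //.
by case: (_ \in K); case: (_ \in L); rewrite ?mul0n ?muln0.
Qed.
Lemma card_shift_pairs : (#|shift_pairs| <= #|F| + #|K| * #|L|)%N.
Proof.
case: subK subL => K0 _ _ _ [L0 _ _ _].
set D := [set xy : F * F | xy.2 == xy.1].
rewrite -(cardsID D shift_pairs); apply: leq_add.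
  have fst_inj : {in shift_pairs :&: D &, injective fst}.
    by move=> [x y] [x' y']; rewrite !inE /= => /andP[_ /eqP->] /andP[_ /eqP->] ->.
  by rewrite -(card_in_imset fst_inj) max_card.
pose ratios (xy : F * F) := (xy.2 / xy.1, (xy.2 + 1) / (xy.1 + 1)).
pose unratio (tw : F * F) := let x := (tw.2 - 1) / (tw.1 - tw.2) in (x, tw.1 * x).
have ratiosK : {in shift_pairs :\: D, cancel ratios unratio}.
  move=> [x y]; rewrite !inE /= => /andP[yx /andP[yxK yxL]].
  have x0 : x != 0 by apply: contraTneq yxK => ->; rewrite invr0 mulr0.
  have x1 : x + 1 != 0 by apply: contraTneq yxL => ->; rewrite invr0 mulr0.
  have yx0 : y * (x + 1) + - (y + 1) * x != 0.
    by rewrite (_ : y * (x + 1) + - (y + 1) * x = y - x) ?subr_eq0 //; ring.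
  rewrite /unratio /ratios /=.
  have -> : ((y + 1) / (x + 1) - 1) / (y / x - (y + 1) / (x + 1)) = x.
    by field; rewrite x0 x1 yx0.
  by rewrite divfK.
rewrite -(card_in_imset (can_in_inj ratiosK)) -cardsX; apply: subset_leq_card.
by apply/subsetP => _ /imsetP[xy /setDP[] /[!inE] /andP[yxK yxL] _ ->]; apply/andP.
Qed.

Local Notation q := (#|F|%:R : int).

Lemma shift_count_variance :
  (q ^+ 2 * (shift_count K L)%:R - (q - 2) * (#|K| * #|L|)%:R) ^+ 2 <=
    q ^+ 4 * #|shift_pairs|%:R - q ^+ 2 * (q - 2) ^+ 2 * (#|K| * #|L|)%:R.
Proof.
have q_gt1 : (1 < #|F|)%N := finNzRing_gt1 F.
pose g (ac : F * F) : int := (coset_shift_count ac.1 ac.2)%:R.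
pose S := [pred ac : F * F | (ac.1 \in K) && (ac.2 \in L)].
have gS : {in S, forall ac, g ac = (shift_count K L)%:R}.
  by move=> [a c] /andP[aK cL]; rewrite /g coset_shift_count_id.
have cardS : #|S| = (#|K| * #|L|)%N.
  by rewrite -cardsX; apply: eq_card => -[a c]; rewrite !inE.
have sum_g : \sum_ac g ac = (q - 2) * (#|K| * #|L|)%:R.
  rewrite -(pair_bigA _ (fun a c => (coset_shift_count a c)%:R)) /=.
  under eq_bigr do rewrite -natr_sum.
  by rewrite -natr_sum sum_coset_shift_count natrM natrB.
have sum_g2 : \sum_ac g ac ^+ 2 = (#|K| * #|L| * #|shift_pairs|)%:R.
  rewrite -(pair_bigA _ (fun a c => (coset_shift_count a c)%:R ^+ 2)) /=.
  under eq_bigr do under eq_bigr do rewrite -natrX.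
  by under eq_bigr do rewrite -natr_sum; rewrite -natr_sum sum_coset_shift_count_sqr.
have KL_gt0 : 0 < (#|K| * #|L|)%:R :> int.
  by rewrite ltr0n muln_gt0; apply/andP; split; apply/card_gt0P; exists 1;
    [case: subK | case: subL].
have var := card_sqr_le_sum (q ^+ 2) ((q - 2) * (#|K| * #|L|)%:R) gS.
rewrite sum_sqr_affine sum_g sum_g2 cardS card_prod in var.
rewrite -(ler_pM2l KL_gt0); apply: le_trans var _; rewrite le_eqVlt; apply/orP; left.
by apply/eqP; rewrite !natrM; ring.
Qed.

Lemma shift_count_deviation :
  (q ^+ 2 * (shift_count K L)%:R - (q - 2) * (#|K| * #|L|)%:R) ^+ 2 <= 5 * q ^+ 5.
Proof.
apply: le_trans shift_count_variance _.
set KL : int := (#|K| * #|L|)%:R.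
have KL_le : KL <= q ^+ 2 by rewrite /KL -natrX ler_nat leq_mul ?max_card.
have P_le : #|shift_pairs|%:R <= q + KL by rewrite -natrD ler_nat card_shift_pairs.
have q_ge2 : 2 <= q by rewrite (ler_nat _ 2) finNzRing_gt1.
have P_bound : q ^+ 4 * #|shift_pairs|%:R <= q ^+ 4 * (q + KL).
  by rewrite ler_wpM2l ?exprn_ge0 // (le_trans _ q_ge2).
have KL_bound : q ^+ 2 * KL * (4 * q - 4) <= q ^+ 2 * q ^+ 2 * (4 * q - 4).
  by rewrite ler_wpM2r ?ler_wpM2l ?exprn_ge0 //; lra.
nra.
Qed.

End ShiftCount.

Section Escape.
Local Open Scope ring_scope.

Lemma shift_count_gap (q a h g g' : int) :
    0 < q -> 0 <= h -> 2 * h <= a -> a <= q -> 256 * q ^+ 3 <= a ^+ 4 -> g <= g' ->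
    (q ^+ 2 * g - (q - 2) * (a * a)) ^+ 2 <= 5 * q ^+ 5 ->
    (q ^+ 2 * g' - (q - 2) * (h * a)) ^+ 2 <= 5 * q ^+ 5 ->
  False.
Proof.
move=> q_gt0 h_ge0 ha aq aq4 gg' dev_g dev_g'.
set u := (q - 2) * (a * a) - q ^+ 2 * g; set v := q ^+ 2 * g' - (q - 2) * (h * a).
have q_ge256 : 256 <= q.
  have a4_le : a ^+ 4 <= q ^+ 4 by apply: lerXn2r; rewrite // nnegrE; lra.
  have : 256 * q ^+ 3 <= q * q ^+ 3 by rewrite -exprS; apply: le_trans aq4 a4_le.
  by rewrite ler_pM2r // exprn_gt0.
have u2 : u ^+ 2 <= 5 * q ^+ 5 by rewrite /u -sqrrN opprB.
have v2 : v ^+ 2 <= 5 * q ^+ 5 by [].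
have main_le : (q - 2) * a * (a - h) <= u + v.
  have -> : u + v = (q - 2) * a * (a - h) + q ^+ 2 * (g' - g) by rewrite /u /v; ring.
  by rewrite lerDl mulr_ge0 ?sqr_ge0 // subr_ge0.
clearbody u v.
have half_le : (q - 2) * (a * a) <= 2 * (u + v).
  apply: le_trans (_ : 2 * ((q - 2) * a * (a - h)) <= _); last by rewrite ler_pM2l.
  have -> : 2 * ((q - 2) * a * (a - h)) = (q - 2) * (a * a) + (q - 2) * a * (a - 2 * h).
    by ring.
  by rewrite lerDl !mulr_ge0 //; lra.
have uv2 : (u + v) ^+ 2 <= 4 * (5 * q ^+ 5).
  have -> : (u + v) ^+ 2 = 2 * u ^+ 2 + 2 * v ^+ 2 - (u - v) ^+ 2 by ring.
  have := sqr_ge0 (u - v); lra.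
have key : (q - 2) ^+ 2 * a ^+ 4 <= 16 * (5 * q ^+ 5).
  have : 0 <= (q - 2) * (a * a) by rewrite !mulr_ge0 //; lra.
  nra.
have : q ^+ 3 * (256 * (q - 2) ^+ 2) <= q ^+ 3 * (80 * q ^+ 2).
  rewrite (_ : q ^+ 3 * (80 * q ^+ 2) = 16 * (5 * q ^+ 5)); last by ring.
  apply: le_trans key; rewrite (_ : q ^+ 3 * _ = (q - 2) ^+ 2 * (256 * q ^+ 3)); last by ring.
  by rewrite ler_wpM2l ?sqr_ge0.
rewrite ler_pM2l ?exprn_gt0 //; nra.
Qed.

Lemma exists_escape (F : finFieldType) (A H : {set F}) :
    mult_subgroup A -> (256 * #|F| ^ 3 <= #|A| ^ 4)%N ->
    mult_subgroup H -> H \proper A ->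
  exists b, [/\ b \in A, 1 + b \in A & b \notin H].
Proof.
move=> subA large subH HA.
have [/existsP[b /and3P[bA b1A bH]] | no_escape] :=
  boolP [exists b, [&& b \in A, 1 + b \in A & b \notin H]]; first by exists b.
have count_le : (shift_count A A <= shift_count H A)%N.
  apply/subset_leq_card/subsetP => x; rewrite !inE => /andP[xA x1A]; rewrite x1A andbT.
  by apply: contraNT no_escape => xH; apply/existsP; exists x; rewrite xA addrC x1A.
have half := card_proper_mult_subgroup subA subH HA.
exfalso; apply: (@shift_count_gap #|F|%:R #|A|%:R #|H|%:R
  (shift_count A A)%:R (shift_count H A)%:R).
- by rewrite ltr0n; apply/card_gt0P; exists 0.
- exact: ler0n.
- by rewrite -(natrM _ 2) ler_nat.
- by rewrite ler_nat max_card.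
- by rewrite -!natrX -natrM ler_nat.
- by rewrite ler_nat.
- by move: (shift_count_deviation subA subA); rewrite natrM.
- by move: (shift_count_deviation subH subA); rewrite natrM.
Qed.
End Escape.

Section RealBound.
Local Open Scope R_scope.

Lemma expn4_ge_of_Rpower (q a : nat) : (0 < q)%N ->
  4 * Rpower (INR q) (3 / 4) <= INR a -> (256 * q ^ 3 <= a ^ 4)%N.
Proof.
move=> q_gt0; have q_pos : 0 < INR q by apply/lt_0_INR/ssrnat.ltP.
set x := Rpower (INR q) (3 / 4) => qa.
have x_pos : 0 < x by apply: exp_pos.
have x4 : x ^ 4 = INR q ^ 3.
  rewrite -Rpower_pow // Rpower_mult -Rpower_pow //; congr Rpower; simpl; Lra.lra.
have : (4 * x) ^ 4 <= INR a ^ 4 by apply: pow_incr; split; Lra.lra.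
rewrite Rpow_mult_distr x4 => le4.
apply/ssrnat.leP/INR_le; rewrite !expnS expn0 !muln1 -!multE !mult_INR.
have -> : INR 256 = 256 by simpl; Lra.lra.
by move: le4; rewrite /pow; Lra.lra.
Qed.

End RealBound.

Theorem theorem8p6 :
  exists c : R, Rlt 0 c /\
    forall (F : finFieldType) (A : {set F}),
      mult_subgroup A ->
      Rle (Rmult c (Rpower (INR #|F|) (Rdiv 3 4))) (INR #|A|) ->
      exists s : seq F, good_cyclic_ordering A s.
Proof.
exists (4 : R); split; first by Lra.lra.
move=> F A subA bound.
have F_gt0 : (0 < #|F|)%N by apply/card_gt0P; exists 0%R.
have large := expn4_ge_of_Rpower F_gt0 bound.
have A_gt1 : (1 < #|A|)%N.
  rewrite ltnNge; apply/negP => A_le1.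
  have : (#|A| ^ 4 <= 1 ^ 4)%N by rewrite leq_exp2r.
  have : (0 < #|F| ^ 3)%N by rewrite expn_gt0 F_gt0.
  lia.
case: (subA) => A0 A1 AM _; apply: sum_cycle_of_escapes => // H.
exact: exists_escape.
Qed.
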